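(* Let $(N_r)_{r\in\mathbb{Z}}$ be the Narayana sequence. For $1\le a\le 8$ define $(p_a,q_a)$ by $(p_1,q_1)=(1,0)$, $(p_2,q_2)=(1,2)$, $(p_3,q_3)=(4,-3)$, $(p_4,q_4)=(5,-2)$, $(p_5,q_5)=(6,5)$, $(p_6,q_6)=(10,-1)$, $(p_7,q_7)=(15,-7)$, $(p_8,q_8)=(21,6)$. Then for each $1\le a\le 8$ and every integer $m$, $N_{m}=p_{a}N_{m-a}+q_{a}N_{m-2a}+N_{m-3a}$.
   Context: The Narayana sequence $(N_r)_{r\in\mathbb{Z}}$ is defined by $N_0=0$, $N_1=N_2=1$ and $N_r=N_{r-1}+N_{r-3}$ for all integers $r$ (extended to negative indices via $N_{r-3}=N_r-N_{r-1}$). *)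

From Stdlib Require Import ZArith.
Open Scope Z_scope.

(* forward: state (N_k, N_{k+1}, N_{k+2}) starting at k = 0 *)
Fixpoint nar_fwd (n : nat) : Z * Z * Z :=
  match n with
  | O => (0, 1, 1)
  | S n' => let '(a, b, c) := nar_fwd n' in (b, c, c + a)
  end.

(* backward: state (N_{-k}, N_{-k+1}, N_{-k+2}); step uses N_{r-3} = N_r - N_{r-1} *)
Fixpoint nar_bwd (n : nat) : Z * Z * Z :=
  match n with
  | O => (0, 1, 1)
  | S n' => let '(a, b, c) := nar_bwd n' in (c - b, a, b)
  end.

Definition narayana (r : Z) : Z :=
  if 0 <=? r then fst (fst (nar_fwd (Z.to_nat r)))
  else fst (fst (nar_bwd (Z.to_nat (- r)))).

Definition pq (a : Z) : Z * Z :=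
  match a with
  | 1 => (1, 0) | 2 => (1, 2) | 3 => (4, -3) | 4 => (5, -2)
  | 5 => (6, 5) | 6 => (10, -1) | 7 => (15, -7) | 8 => (21, 6)
  | _ => (0, 0)
  end.

Example nar_chk : List.map narayana (List.map Z.of_nat (List.seq 0 10))
  = (0 :: 1 :: 1 :: 1 :: 2 :: 3 :: 4 :: 6 :: 9 :: 13 :: nil)%list.
Proof. reflexivity. Qed.
Example nar_neg : List.map (fun k => narayana (- Z.of_nat k)) (List.seq 1 6)
  = (0 :: 1 :: 0 :: -1 :: 1 :: 1 :: nil)%list.
Proof. reflexivity. Qed.

(* The three sequences m |-> N_(m - k a) (k = 0..3) and every integer combination of
   them again satisfy u_r = u_(r-1) + u_(r-3), and such a sequence is determined by
   three consecutive values.  So each identity N_m = p N_(m-a) + q N_(m-2a) + N_(m-3a)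
   only has to be checked numerically at m = 0, 1, 2. *)
From Stdlib Require Import ZArith Lia.
Open Scope Z_scope.

Definition narayana_rec (u : Z -> Z) : Prop :=
  forall r, u r = u (r - 1) + u (r - 3).

Lemma narayana_rec_nonneg (n : nat) :
  narayana (Z.of_nat n + 3) = narayana (Z.of_nat n + 2) + narayana (Z.of_nat n).
Proof.
  unfold narayana.
  rewrite !(proj2 (Z.leb_le _ _)) by lia.
  replace (Z.to_nat (Z.of_nat n + 3)) with (S (S (S n))) by lia.
  replace (Z.to_nat (Z.of_nat n + 2)) with (S (S n)) by lia.
  rewrite Nat2Z.id; simpl.
  destruct (nar_fwd n) as [[a b] c]; simpl; ring.
Qed.

Lemma narayana_rec_nonpos (n : nat) :
  narayana (- Z.of_nat n) = narayana (- Z.of_nat n - 1) + narayana (- Z.of_nat n - 3).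
Proof.
  unfold narayana.
  rewrite (proj2 (Z.leb_gt 0 (- Z.of_nat n - 1))) by lia.
  rewrite (proj2 (Z.leb_gt 0 (- Z.of_nat n - 3))) by lia.
  replace (Z.to_nat (- (- Z.of_nat n - 1))) with (S n) by lia.
  replace (Z.to_nat (- (- Z.of_nat n - 3))) with (S (S (S n))) by lia.
  destruct n as [|n]; [reflexivity|].
  rewrite (proj2 (Z.leb_gt 0 _)) by lia.
  replace (Z.to_nat (- - Z.of_nat (S n))) with (S n) by lia.
  simpl; destruct (nar_bwd n) as [[a b] c]; simpl; ring.
Qed.

Lemma narayanaP : narayana_rec narayana.
Proof.
  intro r.
  destruct (Z_le_gt_dec 3 r).
  - pose proof (narayana_rec_nonneg (Z.to_nat (r - 3))) as E.
    rewrite Z2Nat.id in E by lia.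
    replace (r - 3 + 3) with r in E by ring.
    replace (r - 3 + 2) with (r - 1) in E by ring.
    exact E.
  - destruct (Z_le_gt_dec r 0).
    + pose proof (narayana_rec_nonpos (Z.to_nat (- r))) as E.
      rewrite Z2Nat.id, Z.opp_involutive in E by lia.
      exact E.
    + assert (r = 1 \/ r = 2) as [-> | ->] by lia; reflexivity.
Qed.

Lemma narayana_rec_shift (u : Z -> Z) (k : Z) :
  narayana_rec u -> narayana_rec (fun m => u (m - k)).
Proof.
  intros Hu r; rewrite (Hu (r - k)).
  f_equal; f_equal; ring.
Qed.

Lemma narayana_rec_sub (u v : Z -> Z) :
  narayana_rec u -> narayana_rec v -> narayana_rec (fun m => u m - v m).
Proof. intros Hu Hv r; rewrite (Hu r), (Hv r); ring. Qed.

Lemma narayana_rec_scale (c : Z) (u : Z -> Z) :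
  narayana_rec u -> narayana_rec (fun m => c * u m).
Proof. intros Hu r; rewrite (Hu r); ring. Qed.

Lemma narayana_rec_eq0 (u : Z -> Z) :
  narayana_rec u -> u 0 = 0 -> u 1 = 0 -> u 2 = 0 -> forall m, u m = 0.
Proof.
  intros Hu u0 u1 u2.
  set (P k := u k = 0 /\ u (k + 1) = 0 /\ u (k + 2) = 0).
  assert (HP : forall k, P k).
  { apply Z.peano_ind; unfold P.
    - auto.
    - intros k (uk & uk1 & uk2).
      pose proof (Hu (Z.succ k + 2)) as E.
      replace (Z.succ k + 2 - 1) with (k + 2) in E by ring.
      replace (Z.succ k + 2 - 3) with k in E by ring.
      replace (Z.succ k + 1) with (k + 2) by ring.
      unfold Z.succ in *; lia.
    - intros k (uk & uk1 & uk2); unfold Z.pred.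
      pose proof (Hu (k + 2)) as E.
      replace (k + 2 - 1) with (k + 1) in E by ring.
      replace (k + 2 - 3) with (k + -1) in E by ring.
      replace (k + -1 + 1) with k by ring.
      replace (k + -1 + 2) with (k + 1) by ring.
      lia. }
  intro m; apply (HP m).
Qed.

Theorem theorem1 : forall (a m : Z), 1 <= a <= 8 ->
  narayana m = fst (pq a) * narayana (m - a) + snd (pq a) * narayana (m - 2 * a)
               + narayana (m - 3 * a).
Proof.
  intros a m Ha.
  set (defect m := narayana m - fst (pq a) * narayana (m - a)
                   - snd (pq a) * narayana (m - 2 * a) - narayana (m - 3 * a)).
  enough (defect m = 0) by (unfold defect in *; lia).
  assert (defectP : narayana_rec defect).
  { repeat apply narayana_rec_sub;
      repeat apply narayana_rec_scale;
      try apply narayana_rec_shift; exact narayanaP. }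
  assert (a = 1 \/ a = 2 \/ a = 3 \/ a = 4 \/ a = 5 \/ a = 6 \/ a = 7 \/ a = 8)
    as Ha' by lia.
  apply narayana_rec_eq0; [exact defectP | ..];
    destruct Ha' as [->|[->|[->|[->|[->|[->|[->| ->]]]]]]]; reflexivity.
Qed.
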